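(* Let $C$ be endowed with the closed model defined by counting a family $(X_i)_{i\in I}$, let $Y$ be a cofibrant object and $Z$ any object, and let $f,g:Y\to Z$. Then $f$ and $g$ are right homotopic if and only if $f=g$.
   Context: $C$ has all small limits and colimits, initial object $\emptyset$; the closed model defined by counting $(X_i)_{i\in I}$ (a set-indexed family, with the maps $\emptyset\to X_i$ and the folding maps $X_i+X_i\to X_i$ permitting the small object argument) has as weak equivalences the morphisms $f:X\to X'$ such that $h\mapsto f\circ h$ is bijective $\mathrm{Hom}_C(X_i,X)\to\mathrm{Hom}_C(X_i,X')$ for every $i$, as fibrations all morphisms, and as cofibrations the morphisms with the left lifting property with respect to all weak equivalences. $Y$ is cofibrant if $\emptyset\to Y$ is a cofibration. A path object for $Z$ is an object $Z^I$ with a weak equivalence $i_Z:Z\to Z^I$ and a morphism $p_Z:Z^I\to Z\times Z$ with $p_Z\circ i_Z=(\mathrm{id}_Z,\mathrm{id}_Z)$. Two morphisms $f,g:Y\to Z$ are right homotopic if there is a path object $Z^I$ and a morphism $H:Y\to Z^I$ with $p_Z\circ H=(f,g)$. *)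

Set Universe Polymorphism.
Set Implicit Arguments.

(* A (locally small) category; equality of morphisms is Leibniz equality. *)
Record Category := {
  Ob :> Type;
  Hom : Ob -> Ob -> Type;
  idm : forall A, Hom A A;
  comp : forall A B D, Hom B D -> Hom A B -> Hom A D;
  comp_assoc : forall A B D E (h : Hom D E) (g : Hom B D) (f : Hom A B),
      comp h (comp g f) = comp (comp h g) f;
  comp_id_l : forall A B (f : Hom A B), comp (idm B) f = f;
  comp_id_r : forall A B (f : Hom A B), comp f (idm A) = f
}.

Arguments Hom {c} _ _.
Arguments idm {c} _.
Arguments comp {c A B D} _ _.

Definition opposite (C : Category) : Category.
Proof.
  refine {| Ob := Ob C; Hom := fun A B => @Hom C B A; idm := @idm C;
            comp := fun A B D (g : @Hom C D B) (f : @Hom C B A) => comp f g |}.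
  - intros; symmetry; apply comp_assoc.
  - intros; apply comp_id_r.
  - intros; apply comp_id_l.
Defined.

Record Functor (J C : Category) := {
  fobj :> J -> C;
  fmap : forall a b, @Hom J a b -> @Hom C (fobj a) (fobj b);
  fmap_id : forall a, fmap a a (idm a) = idm (fobj a);
  fmap_comp : forall a b c (g : @Hom J b c) (f : @Hom J a b),
      fmap a c (comp g f) = comp (fmap b c g) (fmap a b f)
}.
Arguments fmap {J C} _ {a b} _.
Arguments fobj {J C} _ _.

Definition is_cone {J C : Category} (D : Functor J C) (L : C)
  (leg : forall j : J, @Hom C L (D j)) : Prop :=
  forall a b (u : @Hom J a b), comp (fmap D u) (leg a) = leg b.

Definition has_limit {J C : Category} (D : Functor J C) : Prop :=
  exists (L : C) (leg : forall j : J, @Hom C L (D j)),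
    is_cone D L leg /\
    forall (M : C) (m : forall j : J, @Hom C M (D j)), is_cone D M m ->
      exists u : @Hom C M L,
        (forall j, comp (leg j) u = m j) /\
        forall u' : @Hom C M L, (forall j, comp (leg j) u' = m j) -> u' = u.

(* "small" = index categories living in a strictly smaller universe *)
Definition has_small_limits@{s u v | s < u, s < v +} (C : Category@{u v}) : Prop :=
  forall (J : Category@{s s}) (D : Functor J C), has_limit D.

Definition op_functor {J C : Category} (D : Functor J C)
  : Functor (opposite J) (opposite C).
Proof.
  refine (@Build_Functor (opposite J) (opposite C) (fun j => @fobj J C D j)
            (fun (a b : J) (u : @Hom J b a) => @fmap J C D b a u) _ _).
  - intros; simpl; exact (fmap_id D _).
  - intros; simpl; exact (fmap_comp D _ _ _ _ _).
Defined.

Definition has_colimit {J C : Category} (D : Functor J C) : Prop :=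
  has_limit (op_functor D).

Definition has_small_colimits@{s u v | s < u, s < v +} (C : Category@{u v}) : Prop :=
  forall (J : Category@{s s}) (D : Functor J C), has_colimit D.

Definition is_initial {C : Category} (E : C) : Prop :=
  forall A : C, exists f : @Hom C E A, forall g : @Hom C E A, g = f.

Record BinProduct {C : Category} (A B : C) := {
  prod_ob : C;
  pr1 : @Hom C prod_ob A;
  pr2 : @Hom C prod_ob B;
  pairing : forall T : C, @Hom C T A -> @Hom C T B -> @Hom C T prod_ob;
  pairing_pr1 : forall T f g, comp pr1 (pairing T f g) = f;
  pairing_pr2 : forall T f g, comp pr2 (pairing T f g) = g;
  pairing_unique : forall T (h : @Hom C T prod_ob),
      h = pairing T (comp pr1 h) (comp pr2 h)
}.
Arguments prod_ob {C A B} _.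
Arguments pr1 {C A B} _.
Arguments pr2 {C A B} _.
Arguments pairing {C A B} _ {T} _ _.

Section Model.
Context {C : Category} (empty : C) (prod : forall A B : C, BinProduct A B)
        {I : Type} (X : I -> C).

Definition weq {A B : C} (f : @Hom C A B) : Prop :=
  forall i : I,
    (forall h h' : @Hom C (X i) A, comp f h = comp f h' -> h = h') /\
    (forall k : @Hom C (X i) B, exists h : @Hom C (X i) A, comp f h = k).

Definition fibration {A B : C} (f : @Hom C A B) : Prop := True.

Definition llp {A B : C} (c : @Hom C A B) {P Q : C} (w : @Hom C P Q) : Prop :=
  forall (a : @Hom C A P) (b : @Hom C B Q), comp w a = comp b c ->
    exists l : @Hom C B P, comp l c = a /\ comp w l = b.

Definition cofibration {A B : C} (c : @Hom C A B) : Prop :=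
  forall (P Q : C) (w : @Hom C P Q), weq w -> llp c w.

Definition cofibrant (Y : C) : Prop :=
  forall e : @Hom C empty Y, cofibration e.

Definition path_object (Z ZI : C) (iZ : @Hom C Z ZI)
  (pZ : @Hom C ZI (prod_ob (prod Z Z))) : Prop :=
  weq iZ /\ comp pZ iZ = pairing (prod Z Z) (idm Z) (idm Z).

Definition right_homotopic {Y Z : C} (f g : @Hom C Y Z) : Prop :=
  exists (ZI : C) (iZ : @Hom C Z ZI) (pZ : @Hom C ZI (prod_ob (prod Z Z)))
         (H : @Hom C Y ZI),
    path_object Z ZI iZ pZ /\ comp pZ H = pairing (prod Z Z) f g.

End Model.


(* Let Z --iZ--> ZI --pZ--> Z x Z be a path object and H : Y -> ZI a
   right homotopy from f to g.  Since Y is cofibrant, the map from the initial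
   object to Y lifts against the weak equivalence iZ; the square with top
   edge empty -> Z commutes automatically because empty is initial.  So H
   factors as H = iZ o l, and then (f, g) = pZ o iZ o l = (id, id) o l = (l, l),
   whence f = l = g.  Conversely Z itself, with the identity and the diagonal,
   is a path object, and f is a right homotopy from f to f. *)

Lemma initial_hom_unique {C : Category} (E : C) (HE : is_initial E)
  (A : C) (u v : @Hom C E A) : u = v.
Proof.
  destruct (HE A) as [w Hw].
  now rewrite (Hw u), (Hw v).
Qed.

Lemma pairing_comp {C : Category} {A B : C} (P : BinProduct A B)
  {S T : C} (a : @Hom C T A) (b : @Hom C T B) (h : @Hom C S T) :
  comp (pairing P a b) h = pairing P (comp a h) (comp b h).
Proof.
  rewrite (pairing_unique P _ (comp (pairing P a b) h)).
  now rewrite !comp_assoc, pairing_pr1, pairing_pr2.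
Qed.

Lemma pairing_inj {C : Category} {A B : C} (P : BinProduct A B)
  {T : C} (a a' : @Hom C T A) (b b' : @Hom C T B) :
  pairing P a b = pairing P a' b' -> a = a' /\ b = b'.
Proof.
  intros E; split.
  - now rewrite <- (pairing_pr1 P T a b), E, pairing_pr1.
  - now rewrite <- (pairing_pr2 P T a b), E, pairing_pr2.
Qed.

Lemma diagonal_comp {C : Category} {A : C} (P : BinProduct A A)
  {T : C} (l : @Hom C T A) :
  comp (pairing P (idm A) (idm A)) l = pairing P l l.
Proof. now rewrite pairing_comp, comp_id_l. Qed.

Section CountingModel.
Context {C : Category} (empty : C) (Hempty : is_initial empty)
        (prod : forall A B : C, BinProduct A B) {I : Type} (X : I -> C).

(* A cofibrant object Y lifts every map Y -> Q along any weak equivalence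
   P -> Q: the lifting square under the initial object always commutes. *)
Lemma cofibrant_lift (Y : C) (HY : cofibrant empty X Y)
  {P Q : C} (w : @Hom C P Q) (Hw : weq X w) (b : @Hom C Y Q) :
  exists l : @Hom C Y P, comp w l = b.
Proof.
  destruct (Hempty Y) as [e _].
  destruct (Hempty P) as [a _].
  assert (Hsq : comp w a = comp b e) by apply (initial_hom_unique empty Hempty).
  destruct (HY e P Q w Hw a b Hsq) as [l [_ Hl]].
  now exists l.
Qed.

Lemma weq_idm (Z : C) : weq X (idm Z).
Proof.
  intros i; split.
  - intros h h' E. now rewrite !comp_id_l in E.
  - intros k. exists k. apply comp_id_l.
Qed.

Lemma trivial_path_object (Z : C) :
  path_object prod X Z Z (idm Z) (pairing (prod Z Z) (idm Z) (idm Z)).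
Proof. split; [apply weq_idm | apply comp_id_r]. Qed.

End CountingModel.

Theorem proposition3p4 (C : Category)
  (Hlim : has_small_limits C) (Hcolim : has_small_colimits C)
  (empty : C) (Hempty : is_initial empty)
  (prod : forall A B : C, BinProduct A B)
  (I : Type) (X : I -> C)
  (Y Z : C) (HY : cofibrant empty X Y) (f g : @Hom C Y Z) :
  right_homotopic prod X f g <-> f = g.
Proof.
  split.
  - intros [ZI [iZ [pZ [H [[Hw Hdiag] HH]]]]].
    destruct (cofibrant_lift empty Hempty X Y HY iZ Hw H) as [l Hl].
    assert (Hfg : pairing (prod Z Z) f g = pairing (prod Z Z) l l).
    { now rewrite <- HH, <- Hl, comp_assoc, Hdiag, diagonal_comp. }
    destruct (pairing_inj _ _ _ _ _ Hfg) as [-> ->].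
    reflexivity.
  - intros <-.
    exists Z, (idm Z), (pairing (prod Z Z) (idm Z) (idm Z)), f.
    split; [apply trivial_path_object | apply diagonal_comp].
Qed.
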